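(* Let $X\subseteq\mathbb{R}^n$ be nonempty, closed and convex, and $F:\mathbb{R}^n\to\mathbb{R}^n$. Suppose (A1) $F$ is $L$-Lipschitz continuous and monotone on $\mathbb{R}^n$; (A2) the solution set $X^*$ of VI$(X,F)$ is nonempty and compact and there is $C>0$ with $\|F(x^* )\|\le C$ for all $x^*\in X^*$; (A3) there is $\alpha>0$ such that $(x-x^* )^TF(x^* )\ge\alpha\,\mathrm{dist}(x,X^* )$ for all $x\in X$ and $x^*\in X^*$. Then for any $x^*\in X^*$, $$F(x)^T(x-x^* )\ge\alpha\,\mathrm{dist}(\Pi_X(x),X^* )-C\,\mathrm{dist}(x,X)\quad\text{for all }x\in\mathbb{R}^n.$$
   Context: VI$(X,F)$: find $x^*\in X$ with $F(x^* )^T(x-x^* )\ge0$ for all $x\in X$; $X^*$ its solution set. $\Pi_X$ is Euclidean projection onto $X$ and $\mathrm{dist}(x,S)=\inf_{y\in S}\|x-y\|$. *)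

(* Vectors of R^n are row vectors 'rV[R]_n,
   R : realType; the topology on 'rV[R]_n is the (product = Euclidean) one. *)
From HB Require Import structures.
From mathcomp Require Import all_boot all_order all_algebra.
From mathcomp Require Import all_classical all_reals all_analysis.
Set Implicit Arguments. Unset Strict Implicit. Unset Printing Implicit Defensive.
Import Order.TTheory GRing.Theory Num.Theory numFieldNormedType.Exports.
Local Open Scope classical_set_scope.
Local Open Scope ring_scope.

Section Defs.
Context {R : realType} {n : nat}.

Definition inner_prod (u v : 'rV[R]_n) : R := \sum_(i < n) u ord0 i * v ord0 i.

Definition euclid_norm (u : 'rV[R]_n) : R := Num.sqrt (inner_prod u u).

Definition set_dist (x : 'rV[R]_n) (S : set 'rV[R]_n) : R :=
  inf [set euclid_norm (x - y) | y in S].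

Definition convex_setR (X : set 'rV[R]_n) : Prop :=
  forall x y, X x -> X y -> forall t : R, 0 <= t <= 1 ->
    X (t *: x + (1 - t) *: y).

(* Euclidean projection onto X: a nearest point of X to x (unique when X is
   nonempty closed convex); chosen with xget, default 0 if none exists. *)
Definition euclid_proj (X : set 'rV[R]_n) (x : 'rV[R]_n) : 'rV[R]_n :=
  xget 0 [set p | X p /\ forall y, X y -> euclid_norm (x - p) <= euclid_norm (x - y)].

Definition VIsol (X : set 'rV[R]_n) (F : 'rV[R]_n -> 'rV[R]_n) : set 'rV[R]_n :=
  [set xs | X xs /\ forall x, X x -> 0 <= inner_prod (F xs) (x - xs)].

Definition lipschitz_with (L : R) (F : 'rV[R]_n -> 'rV[R]_n) : Prop :=
  forall x y, euclid_norm (F x - F y) <= L * euclid_norm (x - y).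

Definition monotone_op (F : 'rV[R]_n -> 'rV[R]_n) : Prop :=
  forall x y, 0 <= inner_prod (F x - F y) (x - y).

End Defs.

From HB Require Import structures.
From mathcomp Require Import all_boot all_order all_algebra.
From mathcomp Require Import all_classical all_reals all_analysis.
From mathcomp Require Import ring lra.
Import Order.TTheory GRing.Theory Num.Theory numFieldNormedType.Exports.
Local Open Scope classical_set_scope.
Local Open Scope ring_scope.

(* Let p be a nearest point of X to x and xs a solution.  By monotonicity,
   F(x)^T (x - xs) >= F(xs)^T (x - xs) = F(xs)^T (p - xs) + F(xs)^T (x - p).
   By (A3) the first term is at least alpha times the distance from p to the
   solution set, and by Cauchy-Schwarz the second is at least
   -||F(xs)|| ||x - p|| >= -C dist(x, X). *)

Section EuclideanGeometry.
Context {R : realType} {n : nat}.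
Implicit Types (u v w : 'rV[R]_n) (X : set 'rV[R]_n).

Lemma inner_prodC u v : inner_prod u v = inner_prod v u.
Proof. by apply: eq_bigr => i _; rewrite mulrC. Qed.

Lemma inner_prodDl u v w : inner_prod (u + v) w = inner_prod u w + inner_prod v w.
Proof. by rewrite /inner_prod -big_split; apply: eq_bigr => i _; rewrite mxE mulrDl. Qed.

Lemma inner_prodDr u v w : inner_prod u (v + w) = inner_prod u v + inner_prod u w.
Proof. by rewrite inner_prodC inner_prodDl !(inner_prodC _ u). Qed.

Lemma inner_prodBl u v w : inner_prod (u - v) w = inner_prod u w - inner_prod v w.
Proof. by rewrite /inner_prod -sumrB; apply: eq_bigr => i _; rewrite !mxE mulrBl. Qed.

Lemma inner_prodZl a u v : inner_prod (a *: u) v = a * inner_prod u v.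
Proof. by rewrite /inner_prod mulr_sumr; apply: eq_bigr => i _; rewrite mxE mulrA. Qed.

Lemma inner_prodZr a u v : inner_prod u (a *: v) = a * inner_prod u v.
Proof. by rewrite inner_prodC inner_prodZl inner_prodC. Qed.

Lemma inner_prod_ge0 u : 0 <= inner_prod u u.
Proof. by apply: sumr_ge0 => i _; rewrite -expr2 sqr_ge0. Qed.

Lemma inner_prod_eq0 u : inner_prod u u = 0 -> u = 0.
Proof.
move=> /eqP; rewrite psumr_eq0 => [/allP u0|i _]; last by rewrite -expr2 sqr_ge0.
apply/rowP => i; rewrite mxE.
by have /implyP/(_ isT) := u0 i (mem_index_enum i); rewrite mulf_eq0 orbb => /eqP.
Qed.

Lemma CauchySchwarz_sqr u v :
  inner_prod u v ^+ 2 <= inner_prod u u * inner_prod v v.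
Proof.
set a := inner_prod u u; set b := inner_prod u v; set c := inner_prod v v.
have [/inner_prod_eq0 u0 | a_neq0] := eqVneq a 0.
  rewrite /b /inner_prod u0 big1 ?expr0n ?mulr_ge0 ?inner_prod_ge0 // => i _.
  by rewrite mxE mul0r.
have a_gt0 : 0 < a by rewrite lt_def a_neq0 inner_prod_ge0.
(* evaluate 0 <= ||t u + v||^2 at its minimiser t = -b/a *)
have := inner_prod_ge0 ((- b / a) *: u + v).
rewrite inner_prodDl !inner_prodDr !inner_prodZl !inner_prodZr (inner_prodC v u) -/a -/b -/c.
have -> : - b / a * (- b / a * a) + - b / a * b + (- b / a * b + c) = c - b ^+ 2 / a.
  by field.
by rewrite subr_ge0 ler_pdivrMr // mulrC.
Qed.

Lemma CauchySchwarz u v : `|inner_prod u v| <= euclid_norm u * euclid_norm v.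
Proof.
rewrite /euclid_norm -sqrtrM ?inner_prod_ge0 // -sqrtr_sqr.
exact/ler_wsqrtr/CauchySchwarz_sqr.
Qed.

Lemma inner_prod_ge_Nnorm u v : - (euclid_norm u * euclid_norm v) <= inner_prod u v.
Proof. by have /ler_normlP[] := CauchySchwarz u v; rewrite lerNl. Qed.

Lemma mx_norm_le_euclid_norm u : `|u| <= euclid_norm u.
Proof.
rewrite [leLHS]/Num.norm /= mx_normrE; apply: bigmax_le; first exact: sqrtr_ge0.
move=> [i j] _ /=; rewrite (ord1 i) /euclid_norm -sqrtr_sqr; apply: ler_wsqrtr.
rewrite /inner_prod (bigD1 j) //= expr2 lerDl.
by apply: sumr_ge0 => k _; rewrite -expr2 sqr_ge0.
Qed.

Lemma euclid_norm_continuous : continuous (@euclid_norm R n).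
Proof.
move=> u; apply: continuous_comp; last exact: sqrt_continuous.
apply: (@continuous_big _ _ +%R 0 predT); first exact: add_continuous.
move=> i _ v; exact: cvgM (@coord_continuous R 1 n ord0 i v) (@coord_continuous R 1 n ord0 i v).
Qed.

Lemma euclid_dist_continuous u : continuous (fun v => euclid_norm (u - v)).
Proof.
move=> v; apply: continuous_comp; last exact: euclid_norm_continuous.
exact: cvgB (cvg_cst _) cvg_id.
Qed.

Definition nearest_point X u p :=
  X p /\ forall y, X y -> euclid_norm (u - p) <= euclid_norm (u - y).

(* A nearest point minimises the distance to u on the compact set of points of
   X no farther from u than a fixed y0 in X. *)
Lemma nearest_point_exists X u :
  X !=set0 -> closed X -> exists p, nearest_point X u p.
Proof.
move=> [y0 Xy0] closedX.
pose d v := euclid_norm (u - v).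
pose A := X `&` d @^-1` [set r | r <= d y0].
have A_neq0 : A !=set0 by exists y0; split => /=.
have closedA : closed A.
  apply: closedI => //; apply: preimage_closed; last exact: closed_le.
  by move=> v _; exact: euclid_dist_continuous.
have boundedA : bounded_set A.
  exists (`|u| + d y0); split; first by rewrite num_real.
  move=> M ltM v [_ dv] /=; rewrite -[v](subKr u).
  apply: le_trans (ler_normB _ _) (ltW (le_lt_trans _ ltM)).
  by rewrite lerD2l (le_trans (mx_norm_le_euclid_norm _)).
have [p /set_mem[Xp dp] pmin] := compact_EVT_min A_neq0
  (bounded_closed_compact boundedA closedA)
  (continuous_subspaceT (euclid_dist_continuous u)).
exists p; split=> // y Xy; have [dy|/ltW dy] := leP (d y) (d y0).
- by apply: pmin; apply/mem_set.
- exact: le_trans dp dy.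
Qed.

Lemma euclid_projP X u :
  X !=set0 -> closed X -> nearest_point X u (euclid_proj X u).
Proof. by move=> X0 closedX; apply: xgetPex; exact: nearest_point_exists. Qed.

Lemma nearest_point_le_set_dist X u p :
  nearest_point X u p -> euclid_norm (u - p) <= set_dist u X.
Proof.
move=> [Xp pmin]; apply: lb_le_inf; first by exists (euclid_norm (u - p)), p.
by move=> _ [y Xy <-]; exact: pmin.
Qed.

Lemma monotone_op_inner_prod (F : 'rV[R]_n -> 'rV[R]_n) u v :
  monotone_op F -> inner_prod (F v) (u - v) <= inner_prod (F u) (u - v).
Proof. by move=> /(_ u v); rewrite inner_prodBl subr_ge0. Qed.

End EuclideanGeometry.

Theorem lemma7 (R : realType) (n : nat) (X : set 'rV[R]_n)
  (F : 'rV[R]_n -> 'rV[R]_n) (L C alpha : R) :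
  X !=set0 -> closed X -> convex_setR X ->
  (* (A1) *)
  lipschitz_with L F -> monotone_op F ->
  (* (A2) *)
  VIsol X F !=set0 -> compact (VIsol X F) ->
  0 < C -> (forall xs, VIsol X F xs -> euclid_norm (F xs) <= C) ->
  (* (A3) *)
  0 < alpha ->
  (forall x xs, X x -> VIsol X F xs ->
     alpha * set_dist x (VIsol X F) <= inner_prod (x - xs) (F xs)) ->
  forall xs, VIsol X F xs ->
  forall x : 'rV[R]_n,
    alpha * set_dist (euclid_proj X x) (VIsol X F) - C * set_dist x X <= inner_prod (F x) (x - xs).
Proof.
move=> X0 closedX _ _ monoF _ _ _ FC _ sharp xs sol_xs x.
set p := euclid_proj X x.
have nearest_p : nearest_point X x p := euclid_projP X x X0 closedX.
have split_xs : inner_prod (F xs) (x - xs)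
    = inner_prod (p - xs) (F xs) + inner_prod (F xs) (x - p).
  by rewrite (inner_prodC (F xs) (x - p)) -inner_prodDl inner_prodC [p - xs + _]addrC subrKA.
have sharp_p := sharp p xs nearest_p.1 sol_xs.
have CS_p := inner_prod_ge_Nnorm (F xs) (x - p).
have norm_Fxs : euclid_norm (F xs) * euclid_norm (x - p) <= C * set_dist x X.
  apply: ler_pM; [exact: sqrtr_ge0 | exact: sqrtr_ge0 | exact: FC |].
  exact: nearest_point_le_set_dist.
have := monotone_op_inner_prod F x xs monoF.
lra.
Qed.
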